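(* Let $(R,\mathfrak m,k)$ be a commutative noetherian local ring with $\mathfrak m^4=0$ and $\mu(\mathfrak m)=e\ge3$. (1) If $H_R(-1)=0$ and an exact zero divisor $a$ lies in $\mathfrak m\smallsetminus\mathfrak m^2$, then every complementary divisor of $a$ also lies in $\mathfrak m\smallsetminus\mathfrak m^2$. (2) If $\mu(\mathfrak m^3)+2\le e$, then no non-zero exact zero divisor of $R$ is contained in $\mathfrak m^2$.
   Context: $H_R(t)=\sum_{n\ge0}\operatorname{rank}_k(\mathfrak m^n/\mathfrak m^{n+1})t^n$ is the Hilbert series of $R$, and $\mu(N)$ is the minimal number of generators of $N$. An element $a\in R$ is an exact zero divisor if $R\neq(0:_R a)\cong R/aR\neq0$; equivalently there exists $b\in R$ with $(0:_R a)=bR$ and $(0:_R b)=aR$, and any such $b$ is called a complementary divisor of $a$. *)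

From HB Require Import structures.
From mathcomp Require Import all_boot all_order all_algebra.
Set Implicit Arguments. Unset Strict Implicit. Unset Printing Implicit Defensive.
Import Order.TTheory GRing.Theory Num.Theory.
Local Open Scope ring_scope.

Section CommAlg.
Variable R : comUnitRingType.

Definition same_set (I J : R -> Prop) : Prop := forall x, I x <-> J x.

Definition is_ideal (I : R -> Prop) : Prop :=
  I 0 /\ (forall x y, I x -> I y -> I (x + y)) /\ (forall r x, I x -> I (r * x)).

Definition gen (s : seq R) : R -> Prop :=
  fun x => exists c : 'I_(size s) -> R, x = \sum_(i < size s) c i * s`_i.

Definition noetherian : Prop :=
  forall I, is_ideal I -> exists s : seq R, same_set I (gen s).

(* local: the non-units are closed under addition (they then form the
   unique maximal ideal m) *)
Definition local_ring : Prop :=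
  forall x y : R, x \notin GRing.unit -> y \notin GRing.unit -> (x + y) \notin GRing.unit.

Definition maxid : R -> Prop := fun x : R => x \notin GRing.unit.

Definition mpow (n : nat) : R -> Prop :=
  fun x => exists (N : nat) (r : 'I_N -> R) (a : 'I_N -> 'I_n -> R),
    (forall i j, maxid (a i j)) /\ x = \sum_(i < N) r i * \prod_(j < n) a i j.

Definition min_gens (I : R -> Prop) (d : nat) : Prop :=
  (exists s : seq R, size s = d /\ same_set I (gen s)) /\
  (forall s : seq R, same_set I (gen s) -> (d <= size s)%N).

(* rank_k (m^n / m^(n+1)) = d : the minimal size of a spanning family of the
   k-vector space m^n/m^(n+1) (k = R/m acts through R since m m^n <= m^(n+1)) *)
Definition spans_quot (n : nat) (s : seq R) : Prop :=
  (forall i, (i < size s)%N -> mpow n s`_i) /\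
  (forall y, mpow n y -> exists c : 'I_(size s) -> R,
      mpow n.+1 (y - \sum_(i < size s) c i * s`_i)).

Definition rank_quot (n d : nat) : Prop :=
  (exists s : seq R, size s = d /\ spans_quot n s) /\
  (forall s : seq R, spans_quot n s -> (d <= size s)%N).

Definition ann (a : R) : R -> Prop := fun x => x * a = 0.

(* exact zero divisor: R <> (0:a), R/aR <> 0, and (0:a) ≅ R/aR, the
   isomorphism being given (first isomorphism theorem) by an R-linear
   surjection phi : R -> (0:a) with kernel aR *)
Definition exact_zero_divisor (a : R) : Prop :=
  ~ same_set (ann a) (fun _ => True) /\
  ~ gen [:: a] 1 /\
  exists phi : R -> R,
    (forall x y, phi (x + y) = phi x + phi y) /\
    (forall r x, phi (r * x) = r * phi x) /\
    same_set (fun y => exists x, phi x = y) (ann a) /\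
    same_set (fun x => phi x = 0) (gen [:: a]).

Definition compl_divisor (a b : R) : Prop :=
  same_set (ann a) (gen [:: b]) /\ same_set (ann b) (gen [:: a]).

End CommAlg.

From HB Require Import structures.
From mathcomp Require Import all_boot all_order all_algebra.
From mathcomp Require Import ring zify.
From Stdlib Require Import IndefiniteDescription.
Import Order.TTheory GRing.Theory Num.Theory.
Local Open Scope ring_scope.
Set Implicit Arguments. Unset Strict Implicit. Unset Printing Implicit Defensive.

(* Both parts rest on one bound. Let q in m with (0 : p) = qR, and suppose
   m p lies in a submodule generated by d elements annihilated by m.
   Then x |-> x p embeds m / qR into a k-vector space of dimension at most d,
   so e = mu(m) <= d + 1.
   (1) If a and b are complementary, a not in m^2 but b in m^2, then
   m^2 <= (0 : b) = aR (as m^4 = 0) forces m^2 = a m, so rank(m^2/m^3) <= rank(m/m^2); with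
   H_R(-1) = 0 this gives rank(m^3) <= 1, and the bound with p = b, q = a
   yields e <= 2.
   (2) If a in m^2 is a non-zero exact zero divisor with (0 : a) = bR, then
   m a <= m^3, and the bound with p = a, q = b yields e <= mu(m^3) + 1. *)

Section LocalRing.
Variable R : comUnitRingType.
Hypothesis R_local : local_ring R.

Lemma maxid0 : @maxid R 0.
Proof. by rewrite /maxid unitr0. Qed.

Lemma maxidMl (r x : R) : maxid x -> maxid (r * x).
Proof. by rewrite /maxid unitrM => /negPf ->; rewrite andbF. Qed.

Lemma maxid_sum n (F : 'I_n -> R) : (forall i, maxid (F i)) -> maxid (\sum_i F i).
Proof.
by move=> mF; apply: (big_ind (@maxid R)); [exact: maxid0 | exact: R_local |].
Qed.

Lemma maxid_ann (a b : R) : a <> 0 -> b * a = 0 -> maxid b.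
Proof.
move=> a_neq0 ba0; apply/negP => b_unit; apply: a_neq0.
by rewrite -(mulKr b_unit a) ba0 mulr0.
Qed.

Lemma mpow0 n : @mpow R n 0.
Proof.
exists 0%N, (fun _ => 0), (fun _ _ => 0); split; first by case.
by rewrite big_ord0.
Qed.

Lemma mpowMl n (r y : R) : mpow n y -> mpow n (r * y).
Proof.
move=> [N [c [a [ma ->]]]]; exists N, (fun i => r * c i), a; split => //.
by rewrite mulr_sumr; apply: eq_bigr => i _; rewrite mulrA.
Qed.

Lemma mpowS_mul n (x y : R) : maxid x -> mpow n y -> mpow n.+1 (x * y).
Proof.
move=> mx [N [c [a [ma ->]]]].
exists N, c, (fun i j => if unlift ord0 j is Some j' then a i j' else x).
split; first by move=> i j; case: (unlift ord0 j).
rewrite mulr_sumr; apply: eq_bigr => i _.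
rewrite big_ord_recl unlift_none.
under [X in _ = _ * (_ * X)]eq_bigr do rewrite liftK.
by rewrite mulrCA.
Qed.

Lemma maxid_mpow1 (x : R) : maxid x -> mpow 1 x.
Proof.
move=> mx; exists 1%N, (fun _ => 1), (fun _ _ => x); split => //.
by rewrite !big_ord1 mul1r.
Qed.

Lemma mpow2_mul_eq0 (x y : R) :
  (forall z : R, mpow 4 z -> z = 0) -> mpow 2 x -> mpow 2 y -> x * y = 0.
Proof.
move=> m4_eq0 [N [c [a [ma ->]]]] y2.
rewrite mulr_suml big1 // => i _.
rewrite !big_ord_recl big_ord0 mulr1 -!mulrA; apply: m4_eq0.
by apply: mpowMl; do 2 apply: mpowS_mul => //.
Qed.

Lemma big_ord_coef_nat n (c : 'I_n -> R) (f : nat -> R) :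
  exists c' : nat -> R, \sum_(i < n) c i * f i = \sum_(i < n) c' i * f i.
Proof.
exists (fun i => if insub i is Some o then c o else 0).
apply: eq_bigr => i _; case: insubP => [o _ /val_inj -> //|].
by rewrite ltn_ord.
Qed.

Lemma genE (s : seq R) x :
  gen s x <-> exists c : nat -> R, x = \sum_(i < size s) c i * s`_i.
Proof.
split; last by move=> [c ->]; exists (fun i => c (val i)).
by move=> [c ->]; apply: big_ord_coef_nat.
Qed.

Lemma gen_nth (s : seq R) i : (i < size s)%N -> gen s s`_i.
Proof.
move=> lt_i_s; apply/genE; exists (fun j => (j == i)%:R).
rewrite (bigD1 (Ordinal lt_i_s)) //= eqxx mul1r big1 ?addr0 // => j ne_ji.
suff /negPf -> : val j != i by rewrite mul0r.
by apply: contra ne_ji => /eqP ji; apply/eqP; apply: val_inj.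
Qed.

Lemma gen1P (a y : R) : gen [:: a] y <-> exists r, y = r * a.
Proof.
split; first by move=> [c ->]; rewrite big_ord1; exists (c ord0).
by move=> [r ->]; exists (fun _ => r); rewrite big_ord1.
Qed.

Lemma spans_quotE n (s : seq R) :
  spans_quot n s <-> (forall i, (i < size s)%N -> mpow n s`_i) /\
    (forall y, mpow n y ->
       exists c : nat -> R, mpow n.+1 (y - \sum_(i < size s) c i * s`_i)).
Proof.
split=> -[s_mpow s_span]; split => // y /s_span [c yc].
  by have [c' cc'] := big_ord_coef_nat c (nth 0 s); exists c'; rewrite -cc'.
by exists (fun i => c (val i)).
Qed.

Lemma exact_zero_divisor_neq0 (a : R) : exact_zero_divisor a -> a <> 0.
Proof.
by move=> [ann_a_proper _] a0; apply: ann_a_proper => x; rewrite /ann a0 mulr0.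
Qed.

Lemma exact_zero_divisor_ann_principal (a : R) : exact_zero_divisor a ->
  exists b, b * a = 0 /\ forall y, y * a = 0 -> exists r, y = r * b.
Proof.
move=> [_ [_ [phi [_ [phi_lin [phi_img _]]]]]].
exists (phi 1); split; first by apply/(proj1 (phi_img _)); exists 1.
move=> y /(proj2 (phi_img y)) [x <-].
by exists x; rewrite -{1}(mulr1 x) phi_lin.
Qed.

Lemma rank_quot0_le1 h : rank_quot R 0 h -> (h <= 1)%N.
Proof.
move=> [_ rank_min]; apply: (rank_min [:: 1]); split.
  case=> // _; exists 1%N, (fun _ => 1), (fun _ _ => 0).
  by split; [move=> _ [] | rewrite big_ord1 big_ord0 mulr1].
by move=> y _; exists (fun _ => y); rewrite big_ord1 /= mulr1 subrr; apply: mpow0.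
Qed.

Lemma rank_quotS_le (a : R) n h h' : maxid a ->
  (forall y, mpow n.+1 y -> exists2 r, mpow n r & y = a * r) ->
  rank_quot R n h -> rank_quot R n.+1 h' -> (h' <= h)%N.
Proof.
move=> ma mSn_mul [[s [<- /spans_quotE [s_mpow s_span]]] _] [_ rank_min].
rewrite -(size_mkseq (fun i => a * s`_i) (size s)).
apply: rank_min; apply/spans_quotE; rewrite size_mkseq; split.
  by move=> i lt_i_s; rewrite nth_mkseq //; apply: mpowS_mul (s_mpow _ _).
move=> y /mSn_mul [r /s_span [c rc] ->]; exists c.
have -> : a * r - \sum_(i < size s) c i * (mkseq (fun i => a * s`_i) (size s))`_i
          = a * (r - \sum_(i < size s) c i * s`_i).
  rewrite mulrBr mulr_sumr; congr (_ - _).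
  by apply: eq_bigr => i _; rewrite nth_mkseq //; ring.
exact: mpowS_mul.
Qed.

End LocalRing.

Section GeneratorBound.
Variable R : comUnitRingType.
Hypothesis R_local : local_ring R.

Lemma big_ord_insert n (k : 'I_n.+1) (x : R) (mu F : nat -> R) :
  \sum_(i < n.+1) (if i == k :> nat then x else mu (unbump k i)) * F i
  = x * F k + \sum_(i < n) mu i * F (bump k i).
Proof.
rewrite (bigD1_ord k) //= eqxx; congr (_ + _); apply: eq_bigr => i _.
by rewrite eq_sym (negPf (neq_bump _ _)) bumpK.
Qed.

Lemma bump_ltn n k i : (i < n)%N -> (bump k i < n.+1)%N.
Proof.
by move=> lt_i_n; rewrite /bump; case: (k <= i)%N; rewrite ?add0n ?add1n // ltnW.
Qed.

(* More than d vectors of R^d are linearly dependent modulo m, with a unit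
   among the coefficients: Gaussian elimination over the residue field. *)
Lemma residue_dependence d : forall n (c : nat -> nat -> R), (d < n)%N ->
  exists lam : nat -> R, (exists2 k, (k < n)%N & lam k \is a GRing.unit) /\
    forall j, (j < d)%N -> maxid (\sum_(i < n) lam i * c i j).
Proof.
elim: d => [|d IHd] n c lt_d_n.
  by exists (fun _ => 1); split=> //; exists 0%N; rewrite ?unitr1.
have [pivot | no_pivot] := boolP [exists i : 'I_n, c i 0%N \is a GRing.unit]; last first.
  have [lam [unit_lam lamc]] := IHd n (fun i j => c i j.+1) (ltnW lt_d_n).
  exists lam; split => // -[|j] lt_j_d; last exact: lamc.
  apply: maxid_sum => // i; apply: maxidMl.
  by move: no_pivot; rewrite negb_exists => /forallP /(_ i).
case: n lt_d_n pivot => // n lt_d_n /existsP [k unit_u].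
set u := c k 0%N.
pose c' i j := c (bump k i) j.+1 - c (bump k i) 0%N * u^-1 * c k j.+1.
have [mu [[l lt_l_n unit_mu] muc']] := IHd n c' lt_d_n.
pose S0 := \sum_(i < n) mu i * c (bump k i) 0%N.
exists (fun i : nat => if i == k then - S0 * u^-1 else mu (unbump k i)); split.
  exists (bump k l); first exact: bump_ltn.
  by rewrite eq_sym (negPf (neq_bump _ _)) bumpK.
case=> [|j] lt_j_d.
  rewrite (big_ord_insert _ _ _ (c^~ 0%N)).
  by rewrite -mulrA mulVr ?mulr1 ?addNr //; apply: maxid0.
rewrite (big_ord_insert _ _ _ (c^~ j.+1)).
suff -> : - S0 * u^-1 * c k j.+1 + \sum_(i < n) mu i * c (bump k i) j.+1
          = \sum_(i < n) mu i * c' i j by apply: muc'.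
rewrite /c' /S0.
under [X in _ = X]eq_bigr do rewrite mulrBr mulrA [_ * (_ * _)]mulrA.
by rewrite sumrB -!mulr_suml; ring.
Qed.

Definition lincomb (q : R) (f : nat -> R) n (x : R) :=
  exists b (c : nat -> R), x = b * q + \sum_(i < n) c i * f i.

Lemma gen_lincomb q (f : nat -> R) n x : gen (q :: mkseq f n) x <-> lincomb q f n x.
Proof.
rewrite genE /lincomb /= size_mkseq; split.
  move=> [c ->]; exists (c 0%N), (fun i => c i.+1).
  rewrite big_ord_recl /=; congr (_ + _); apply: eq_bigr => i _.
  by rewrite /bump add0n nth_mkseq.
move=> [b [c ->]]; exists (fun i => if i is i'.+1 then c i' else b).
rewrite big_ord_recl /=; congr (_ + _); apply: eq_bigr => i _.
by rewrite /bump add0n nth_mkseq.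
Qed.

Lemma lincomb_nth q (f : nat -> R) n i : (i < n)%N -> lincomb q f n (f i).
Proof.
move=> lt_i_n; apply/gen_lincomb.
by have := @gen_nth _ (q :: mkseq f n) i.+1; rewrite /= nth_mkseq ?size_mkseq //; apply.
Qed.

Lemma maxid_lincomb q (f : nat -> R) n x :
  maxid q -> (forall i, (i < n)%N -> maxid (f i)) -> lincomb q f n x -> maxid x.
Proof.
move=> mq mf [b [c ->]]; apply: R_local; first exact: maxidMl.
by apply: maxid_sum => // i; apply/maxidMl/mf.
Qed.

Section AnnihilatorBound.
Variables (q p : R) (d : nat) (z : nat -> R).
Hypothesis maxid_q : maxid q.
Hypothesis ann_p : forall y, y * p = 0 -> exists r, y = r * q.
Hypothesis maxid_mul_p : forall x, maxid x ->
  exists c : nat -> R, x * p = \sum_(j < d) c j * z j.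
Hypothesis maxid_mul_z : forall j y, (j < d)%N -> maxid y -> y * z j = 0.

Let generates (f : nat -> R) n := forall x, maxid x <-> lincomb q f n x.

(* A dependence [lam] modulo m of the rows of coefficients of the f_i p
   gives (sum lam_i f_i) p = 0, hence sum lam_i f_i in qR; the f_k with unit
   lam_k is then redundant. *)
Lemma drop_generator n (f : nat -> R) : (d < n.+1)%N -> generates f n.+1 ->
  exists g, generates g n.
Proof.
move=> lt_d_n gen_f.
have maxid_f i : (i < n.+1)%N -> maxid (f i) by move/lincomb_nth/gen_f.
have row_coefs i : exists ci : nat -> R,
    (i < n.+1)%N -> f i * p = \sum_(j < d) ci j * z j.
  case: (ltnP i n.+1) => [/maxid_f/maxid_mul_p [ci fpci] | _].
    by exists ci.
  by exists (fun _ => 0).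
have [c fpc] := functional_choice _ row_coefs.
have [lam [[k0 lt_k0 unit_u] lamc]] := residue_dependence c lt_d_n.
set u := lam k0; set k : 'I_n.+1 := Ordinal lt_k0.
have [r lamf_eq] : exists r, \sum_(i < n.+1) lam i * f i = r * q.
  apply: ann_p; rewrite mulr_suml.
  under eq_bigr => i _ do rewrite -mulrA (fpc i (ltn_ord i)) mulr_sumr.
  rewrite exchange_big /= big1 // => j _.
  under eq_bigr do rewrite mulrA.
  by rewrite -mulr_suml; apply: maxid_mul_z => //; apply: lamc.
pose g i := f (bump k0 i).
pose S := \sum_(i < n) lam (bump k0 i) * g i.
have f_k0 : f k0 = u^-1 * (r * q - S).
  by rewrite -lamf_eq (bigD1_ord k) //= addrK mulKr.
exists g => x; split; last first.
  by apply: maxid_lincomb => // i /(bump_ltn k); apply: maxid_f.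
move=> /gen_f [b [c' ->]].
exists (b + c' k0 * u^-1 * r),
  (fun i => c' (bump k0 i) - c' k0 * u^-1 * lam (bump k0 i)).
rewrite (bigD1_ord k) //= f_k0.
have -> : \sum_(i < n) (c' (bump k0 i) - c' k0 * u^-1 * lam (bump k0 i)) * g i
          = \sum_(i < n) c' (bump k0 i) * g i - c' k0 * u^-1 * S.
  by rewrite /S mulr_sumr -sumrB; apply: eq_bigr => i _; ring.
by rewrite /g; ring.
Qed.

Lemma few_generators n (f : nat -> R) : generates f n ->
  exists n' g, (n' <= d)%N /\ generates g n'.
Proof.
elim: n f => [|n IHn] f gen_f; first by exists 0%N, f.
case: (leqP n.+1 d) => [le_n_d | lt_d_n]; first by exists n.+1, f.
by have [g /IHn] := drop_generator lt_d_n gen_f.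
Qed.

Lemma min_gens_maxid_le e : min_gens (@maxid R) e -> (e <= d.+1)%N.
Proof.
move=> [[s [<- gen_s]] gens_min].
have [n [g [le_n_d gen_g]]] : exists n g, (n <= d)%N /\ generates g n.
  apply: (few_generators (f := nth 0 s)) => x; split.
    by move/gen_s/genE => [c ->]; exists 0, c; rewrite mul0r add0r.
  by apply: maxid_lincomb => // i /gen_nth /gen_s.
apply: leq_trans (gens_min (q :: mkseq g n) _) _; last by rewrite /= size_mkseq.
by move=> x; rewrite gen_lincomb.
Qed.

End AnnihilatorBound.
End GeneratorBound.

Section CubeOfMaximalIdeal.
Variable R : comUnitRingType.
Hypothesis R_local : local_ring R.
Hypothesis mpow4_eq0 : forall x : R, mpow 4 x -> x = 0.

Lemma spans_quot3_gen (s : seq R) : spans_quot 3 s ->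
  forall y, mpow 3 y -> exists c : nat -> R, y = \sum_(i < size s) c i * s`_i.
Proof.
move=> /spans_quotE [_ s_span] y /s_span [c /mpow4_eq0 /eqP].
by rewrite subr_eq0 => /eqP ->; exists c.
Qed.

Lemma min_gens_maxid_le_mpow3 (p q : R) (s : seq R) e :
  maxid q -> (forall y, y * p = 0 -> exists r, y = r * q) -> mpow 2 p ->
  (forall i, (i < size s)%N -> mpow 3 s`_i) ->
  (forall y, mpow 3 y -> exists c : nat -> R, y = \sum_(i < size s) c i * s`_i) ->
  min_gens (@maxid R) e -> (e <= (size s).+1)%N.
Proof.
move=> mq ann_p p2 s_mpow3 s_gen; apply: (min_gens_maxid_le R_local mq ann_p).
  by move=> x mx; apply/s_gen/mpowS_mul.
by move=> j y lt_j_s my; apply/mpow4_eq0/mpowS_mul/s_mpow3.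
Qed.

Lemma mpow2_sub_mul_maxid (a b : R) : compl_divisor a b -> ~ mpow 2 a -> mpow 2 b ->
  forall y, mpow 2 y -> exists2 r, mpow 1 r & y = a * r.
Proof.
move=> [_ ann_b] a_not2 b2 y y2.
have /ann_b /gen1P [r yr] : y * b = 0 by apply: mpow2_mul_eq0.
exists r; last by rewrite yr mulrC.
apply: maxid_mpow1; apply/negP => unit_r; apply: a_not2.
by rewrite -(mulKr unit_r a) -yr; apply: mpowMl.
Qed.

End CubeOfMaximalIdeal.

Lemma alternating_rank_sum_le (h : nat -> nat) :
  \sum_(n < 4) (-1) ^+ n * (h n)%:Z = 0 -> (h 0 <= 1)%N -> (h 2 <= h 1)%N ->
  (h 3 <= 1)%N.
Proof.
rewrite !big_ord_recr big_ord0 /= expr0 expr1.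
by rewrite (_ : (-1 : int) ^+ 2 = 1) // (_ : (-1 : int) ^+ 3 = -1) //; lia.
Qed.

Theorem lemma2p4 (R : comUnitRingType) (e : nat) :
  local_ring R -> noetherian R ->
  (forall x : R, @mpow R 4 x -> x = 0) ->
  min_gens (@maxid R) e -> (3 <= e)%N ->
  ((exists h : nat -> nat,
       (forall n, (n < 4)%N -> @rank_quot R n (h n)) /\
       \sum_(n < 4) (-1) ^+ n * (h n)%:Z = 0) ->
    forall a b : R, exact_zero_divisor a -> @maxid R a -> ~ @mpow R 2 a ->
      compl_divisor a b -> @maxid R b /\ ~ @mpow R 2 b)
  /\
  (forall d3 : nat, min_gens (@mpow R 3) d3 -> (d3 + 2 <= e)%N ->
    forall a : R, exact_zero_divisor a -> a <> 0 -> ~ @mpow R 2 a).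
Proof.
move=> R_local _ mpow4_eq0 gens_e le3e; split.
  move=> [h [rank_h euler_h]] a b ezd_a ma a_not2 compl_ab.
  have [ann_a ann_b] := compl_ab.
  have mb : maxid b.
    apply: (maxid_ann (exact_zero_divisor_neq0 ezd_a)).
    by apply/ann_a/gen1P; exists 1; rewrite mul1r.
  split=> // b2.
  have h3_le1 : (h 3 <= 1)%N.
    apply: alternating_rank_sum_le euler_h (rank_quot0_le1 (rank_h 0%N isT)) _.
    apply: (rank_quotS_le ma _ (rank_h 1%N isT) (rank_h 2%N isT)).
    exact: mpow2_sub_mul_maxid compl_ab a_not2 b2.
  have [[s [size_s span_s]] _] := rank_h 3%N isT.
  have [s_mpow3 _] := span_s.
  have ann_b_sub y : y * b = 0 -> exists r, y = r * a by move/ann_b/gen1P.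
  have := min_gens_maxid_le_mpow3 R_local mpow4_eq0 ma ann_b_sub b2 s_mpow3
            (spans_quot3_gen mpow4_eq0 span_s) gens_e.
  by rewrite size_s; lia.
move=> d3 [[z [size_z gen_z]] _] le_d3_e a ezd_a a_neq0 a2.
have [b [ba0 ann_a_sub]] := exact_zero_divisor_ann_principal ezd_a.
have z_mpow3 i : (i < size z)%N -> mpow 3 z`_i by move/gen_nth/gen_z.
have z_gen y : mpow 3 y -> exists c : nat -> R, y = \sum_(i < size z) c i * z`_i.
  by move/gen_z/genE.
have := min_gens_maxid_le_mpow3 R_local mpow4_eq0 (maxid_ann a_neq0 ba0)
          ann_a_sub a2 z_mpow3 z_gen gens_e.
by rewrite size_z; lia.
Qed.
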